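(* Let $\mathcal A$ be a finite set, $\mathcal R\subset F(\mathcal A)$ finite, $\phi:F(\mathcal A)\to F(\mathcal A)$ a homomorphism, $G$ the group with presentation $\mathcal P=\langle t,\mathcal A:\mathcal R,\ t^{-1}at=\phi(a)\ (a\in\mathcal A)\rangle$, $X$ its Cayley 2-complex, and $\Lambda\subset X$ the Cayley graph of $A=\langle\mathcal A\rangle\le G$ with respect to $\mathcal A$ (containing the identity vertex). For each $\mathcal A$-edge $e$ of $X$ let $H_e:[0,1]\times[0,\infty)\to X$ be the strip map described in the context. If $C\subset X$ is compact, then there are only finitely many edges $e$ of $\Lambda$ such that the image of $H_e$ intersects $C$.
   Context: The Cayley 2-complex $X$ of $\mathcal P$ is the simply connected 2-complex whose 1-skeleton is the Cayley graph of $G$ with respect to $\mathcal A\cup\{t\}$ (vertex set $G$), with a 2-cell at each vertex for each relator. $\Lambda$ is the subgraph with vertex set $A$ and the $\mathcal A$-labeled edges between them. Strip map: let $e$ be an edge from $v$ to $w$ with label $a\in\mathcal A$. For each integer $k\ge0$, the edge path at $vt^k$ reading the word $\phi^k(a)$ ends at $wt^k$; the conjugation 2-cells (with boundaries $b\,t\,\phi(b)^{-1}t^{-1}$, $b\in\mathcal A^{\pm1}$) attached along the edges of this path form a strip whose boundary consists of the path labeled $\phi^k(a)$ at $vt^k$, the $t$-edge from $vt^k$ to $vt^{k+1}$, the path labeled $\phi^{k+1}(a)$ at $vt^{k+1}$, and the $t$-edge from $wt^k$ to $wt^{k+1}$. $H_e$ maps $[0,1]\times[k,k+1]$ onto this strip,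 with $[0,1]\times\{k\}$ going to the path labeled $\phi^k(a)$ and $\{0\}\times[k,k+1]$, $\{1\}\times[k,k+1]$ going to the $t$-edges at $vt^k$, $wt^k$. In particular $H_e(x,0)=e(x)$ and $H_e(0,\cdot)$, $H_e(1,\cdot)$ are the edge path rays at $v$, $w$ all of whose edges are labeled $t$. *)

From HB Require Import structures.
From mathcomp Require Import all_boot all_order all_algebra.
From mathcomp Require Import all_classical all_reals all_analysis.
From Stdlib Require List.
Set Implicit Arguments. Unset Strict Implicit. Unset Printing Implicit Defensive.
Import Order.TTheory GRing.Theory Num.Theory numFieldNormedType.Exports.
Local Open Scope classical_set_scope.
Local Open Scope ring_scope.

Section Words.
Variable T : eqType.
(* a letter (x, b): x^(+1) if b = false, x^(-1) if b = true *)
Definition linv (l : T * bool) : T * bool := (l.1, ~~ l.2).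
Definition winv (w : seq (T * bool)) := rev (map linv w).
Definition reduce (w : seq (T * bool)) : seq (T * bool) :=
  foldr (fun x acc => match acc with
                      | y :: acc' => if y == linv x then acc' else x :: acc
                      | [::] => [:: x] end) [::] w.
End Words.

Section Cayley.
(* 𝒜 : finite generating set; Rs : the finite set R ⊂ F(𝒜) (as words);
   phi a : a word representing φ(a) ∈ F(𝒜) (φ is the homomorphism
   determined by these images). The letter None stands for t. *)
Variables (A : finType) (Rs : seq (seq (A * bool))) (phi : A -> seq (A * bool)).

Definition letter := (option A * bool)%type.
Definition word := seq letter.
Definition liftw (w : seq (A * bool)) : word := map (fun l => (Some l.1, l.2)) w.

Definition phiA (b : A) : seq (A * bool) := reduce (phi b).
Definition phiF (w : seq (A * bool)) : seq (A * bool) :=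
  reduce (flatten (map (fun l => if l.2 then winv (phiA l.1) else phiA l.1) w)).
Definition phi_iter (k : nat) (a : A) : seq (A * bool) := iter k phiF [:: (a, false)].

Definition conjrel (b : A) : word :=
  [:: (Some b, false); (None, false)] ++ winv (liftw (phiA b)) ++ [:: (None, true)].
Definition relidx := ('I_(size Rs) + A)%type.
Definition relw (i : relidx) : word :=
  match i with
  | inl j => liftw (reduce (nth [::] Rs j))
  | inr b => conjrel b
  end.

Inductive geq : word -> word -> Prop :=
| geq_refl w : geq w w
| geq_sym w1 w2 : geq w1 w2 -> geq w2 w1
| geq_trans w1 w2 w3 : geq w1 w2 -> geq w2 w3 -> geq w1 w3
| geq_cancel u v x : geq (u ++ x :: linv x :: v) (u ++ v)
| geq_rel u v i : geq (u ++ relw i ++ v) (u ++ v).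

Definition G := {S : set word | exists w, S = geq w}.
Definition cls (w : word) : G := exist _ (geq w) (ex_intro _ w erefl).
Definition rep (g : G) : word := projT1 (cid (proj2_sig g)).
Definition gmul (g : G) (w : word) : G := cls (rep g ++ w).

Definition inA (g : G) : Prop := exists w : seq (A * bool), g = cls (liftw w).

Variable R : realType.

Definition open01 := {s : R | 0 < s < 1}.
Definition odisk := {z : R * R | z.1 ^+ 2 + z.2 ^+ 2 < 1}.

(* points of X: vertices g ∈ G; interior points of the edge from g to g x
   (x ∈ 𝒜 ∪ {t}); interior points of the 2-cell at g for relator i *)
Inductive X :=
| XV of G
| XE of G & option A & open01
| XC of G & relidx & odisk.

Definition edgechar (g : G) (x : option A) (s : R) : X :=
  match insub s : option open01 with
  | Some s' => XE g x s'
  | None => if s <= 0 then XV g else XV (gmul g [:: (x, false)])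
  end.

Definition letterpt (g : G) (l : letter) (u : R) : X :=
  if l.2 then edgechar (gmul g [:: l]) l.1 (1 - u) else edgechar g l.1 u.

Definition pathpt (g : G) (r : word) (s : R) : X :=
  let n := size r in
  if n is 0 then XV g else
  let j := minn `|Num.floor (s * n%:R)|%N n.-1 in
  letterpt (gmul g (take j r)) (nth (None, false) r j) (s * n%:R - j%:R).

(* characteristic map of the 2-cell (g, i), on the square [0,1]^2
   (polar coordinates (s, rho): angle 2 pi s, radius rho; rho = 1 is the
   boundary, attached along the loop reading relw i at g) *)
Definition cellchar (g : G) (i : relidx) (p : R * R) : X :=
  let s := p.1 in let rho := p.2 in
  if 1 <= rho then pathpt g (relw i) s else
  match insub (rho * cos (2 * pi * s), rho * sin (2 * pi * s)) : option odisk with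
  | Some z => XC g i z
  | None => XV g
  end.

Definition I01 : set R := [set s | 0 <= s <= 1].
Definition I01sq : set (R * R) := [set p | 0 <= p.1 <= 1 /\ 0 <= p.2 <= 1].

Definition rel_open {T : topologicalType} (D P : set T) : Prop :=
  exists V : set T, open V /\ P `&` D = V `&` D.

(* CW (weak) topology on X *)
Definition openX (U : set X) : Prop :=
  (forall g x, @rel_open R I01 [set s | U (edgechar g x s)]) /\
  (forall g i, @rel_open (R * R)%type I01sq [set p | U (cellchar g i p)]).

Definition compactX (C : set X) : Prop :=
  forall F : set (set X), (forall U, F U -> openX U) ->
    C `<=` \bigcup_(U in F) U ->
    exists s : seq (set X), (forall U, List.In U s -> F U) /\
      C `<=` [set x | exists U, List.In U s /\ U x].

Definition edge_img (g : G) (x : option A) : set X := edgechar g x @` I01.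
Definition cell_img (g : G) (i : relidx) : set X := cellchar g i @` I01sq.

Definition conjcell (u : G) (l : A * bool) : set X :=
  if l.2 then cell_img (gmul u [:: (Some l.1, true)]) (inr l.1)
  else cell_img u (inr l.1).

Definition tpow (k : nat) : word := nseq k (None, false).

(* image of H_e on [0,1] x [k, k+1], e the edge from v labeled a *)
Definition strip (v : G) (a : A) (k : nat) : set X :=
  let w := gmul v [:: (Some a, false)] in
  let p := phi_iter k a in
  let u := gmul v (tpow k) in
  edge_img u None `|` edge_img (gmul w (tpow k)) None `|`
  [set y | exists2 j : nat, (j < size p)%N &
            conjcell (gmul u (liftw (take j p))) (nth (a, false) p j) y].

Definition Himg (v : G) (a : A) : set X := \bigcup_(k in [set: nat]) strip v a k.

End Cayley.

From Pilot Require Import Defs.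
From HB Require Import structures.
From mathcomp Require Import all_boot all_order all_algebra.
From mathcomp Require Import all_classical all_reals all_analysis.
From mathcomp Require Import lra zify.
Set Implicit Arguments. Unset Strict Implicit. Unset Printing Implicit Defensive.
Import Order.TTheory GRing.Theory Num.Theory numFieldNormedType.Exports.
Local Open Scope classical_set_scope.

(* Every point y of X lies in an open cell based at a vertex [base y].  The
   t-exponent sum is a homomorphism G -> Z vanishing on A, and every point of
   the k-th strip of H_e, for e an edge of Lambda at v, has base v x for one of
   finitely many words x of t-exponent at least k.  Hence each vertex is the
   base of points of only finitely many H_e.  If infinitely many H_e met C,
   choosing one point of C over each of infinitely many bases would give an
   infinite set P in C with pairwise distinct bases.  The preimage of such a
   set under every characteristic map is closed, so all subsets of P are closed
   in X, and the cover of C by the complements of the sets P minus a point has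
   no finite subcover. *)

Lemma subset1_finite (T : Type) (S : set T) : is_subset1 S -> finite_set S.
Proof.
move=> S1; have [[x Sx]|noS] := pselect (exists x, S x).
  have -> : S = [set x] by apply/seteqP; split=> [y Sy|y ->] //; exact: S1.
  exact: finite_set1.
have -> : S = set0 by apply/seteqP; split=> y // Sy; apply: noS; exists y.
exact: finite_set0.
Qed.

Lemma finite_set_In (T : Type) (s : seq T) : finite_set [set x | List.In x s].
Proof.
elim: s => [|x s IH]; first exact: finite_set0.
apply: (@sub_finite_set _ _ (x |` [set y | List.In y s])); first by move=> y [<-|sy]; [left|right].
by rewrite finite_setU; split; [exact: finite_set1 | exact: IH].
Qed.

Lemma infinite_image_inj_subset (T U : Type) (f : T -> U) (D : set T) :
  ~ finite_set (f @` D) -> exists P, [/\ P `<=` D, set_inj P f & ~ finite_set P].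
Proof.
move=> infD; have [t0 _] : D !=set0.
  by apply: contrapT => /set0P/negP/negPn/eqP D0; apply: infD; rewrite D0 image_set0.
have preim u : exists t, (f @` D) u -> D t /\ f t = u.
  have [[t Dt <-]|nDu] := pselect ((f @` D) u); first by exists t.
  by exists t0 => /nDu.
have [g gP] := choice preim.
exists (g @` (f @` D)); split.
- by move=> _ [u Du <-]; exact: (gP u Du).1.
- move=> _ _ /set_mem[u Du <-] /set_mem[u' Du' <-].
  by rewrite (gP u Du).2 (gP u' Du').2 => ->.
- move=> finP; apply: infD; apply: sub_finite_set (finite_image f finP).
  by move=> u Du; exists (g u); [exists u | exact: (gP u Du).2].
Qed.

Lemma cover_compact_discrete_finite (T : Type) (op : set T -> Prop) (C P : set T) :
  (forall F : set (set T), (forall U, F U -> op U) -> C `<=` \bigcup_(U in F) U ->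
     exists s : seq (set T), (forall U, List.In U s -> F U) /\
       C `<=` [set x | exists U, List.In U s /\ U x]) ->
  P `<=` C -> (forall Q, Q `<=` P -> op (~` Q)) -> finite_set P.
Proof.
move=> compactC PC closedP.
(* Each [~` (P `\ p)] is open and meets [P] at most in [p]. *)
have [|c _|s [sF Cs]] := compactC (range (fun p => ~` (P `\ p))).
- by move=> _ [p _ <-]; apply: closedP => q [].
- by exists (~` (P `\ c)); [exists c | case=> _; apply].
apply: (@sub_finite_set _ _ (\bigcup_(U in [set U | List.In U s]) (P `&` U))).
  by move=> p Pp; have [U [sU Up]] := Cs p (PC p Pp); exists U.
apply: bigcup_finite (finite_set_In s) _ => U /sF[p _ <-].
apply: subset1_finite => a b [Pa Ua] [Pb Ub].
by have [-> ->] : a = p /\ b = p by split; apply: contrapT => ?; [apply: Ua | apply: Ub].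
Qed.

Lemma finite_set_closed (T : topologicalType) (S : set T) :
  hausdorff_space T -> finite_set S -> closed S.
Proof. by move=> /hausdorff_accessible /accessible_finite_set_closed; apply. Qed.

Lemma rel_openC (T : topologicalType) (D S K : set T) :
  closed K -> S `&` D = K `&` D -> rel_open D (~` S).
Proof.
move=> cK SK; exists (~` K); split; first exact: closed_openC.
apply/seteqP; split=> x [nx Dx]; split=> // y; apply: nx.
- by have [] : (S `&` D) x by rewrite SK.
- by have [] : (K `&` D) x by rewrite -SK.
Qed.

Local Open Scope ring_scope.

Definition polar (R : realType) (p : R * R) : R * R :=
  (p.2 * cos (2 * pi * p.1), p.2 * sin (2 * pi * p.1)).

Lemma polar_norm (R : realType) (p : R * R) : (polar p).1 ^+ 2 + (polar p).2 ^+ 2 = p.2 ^+ 2.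
Proof. by rewrite !exprMn -mulrDr cos2Dsin2 mulr1. Qed.

Lemma continuous_polar (R : realType) : continuous (@polar R).
Proof.
have fst_cont : continuous (fun p : R * R => p.1) by move=> p; exact: cvg_fst.
have snd_cont : continuous (fun p : R * R => p.2) by move=> p; exact: cvg_snd.
have angle_cont : continuous (fun p : R * R => 2 * pi * p.1).
  by move=> p; apply: cvgMl_tmp; exact: fst_cont.
move=> p; apply: (@cvg_pair _ _ _ (nbhs p) (nbhs (polar p).1) (nbhs (polar p).2)).
all: apply: continuousM; try exact: snd_cont.
- exact: continuous_comp (angle_cont p) (@continuous_cos R _).
- exact: continuous_comp (angle_cont p) (@continuous_sin R _).
Qed.

Lemma pathpt_param_itv (R : realType) (n : nat) (s : R) : 0 <= s <= 1 ->
  0 <= s * n.+1%:R - (minn `|Num.floor (s * n.+1%:R)|%N n)%:R <= 1.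
Proof.
move=> /andP[s0 s1]; set t := s * n.+1%:R.
have t0 : 0 <= t by rewrite mulr_ge0.
have tn : t <= n.+1%:R by rewrite -[leRHS]mul1r ler_wpM2r.
have /andP[ft] := floor_itv t; rewrite intrD1 => tf.
have f_nat : (`|Num.floor t|%N)%:R = (Num.floor t)%:~R :> R.
  by rewrite natr_absz ger0_norm // floor_ge0.
case: (leqP `|Num.floor t|%N n) => [fn|nf].
  by rewrite f_nat; lra.
have : n.+1%:R <= (Num.floor t)%:~R :> R by rewrite -f_nat ler_nat.
by rewrite -natr1; lra.
Qed.

Local Close Scope ring_scope.

Section Presentation.
Variables (A : finType) (Rs : seq (seq (A * bool))) (phi : A -> seq (A * bool)).

Local Notation eqG := (Defs.geq Rs phi).

Lemma geq_catr (w1 w2 v : word A) : eqG w1 w2 -> eqG (w1 ++ v) (w2 ++ v).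
Proof.
elim=> {w1 w2} [w|w1 w2 _ IH|w1 w2 w3 _ IH1 _ IH2|u u' x|u u' i].
- exact: geq_refl.
- exact: geq_sym.
- exact: geq_trans IH1 IH2.
- by rewrite -!catA; apply: geq_cancel.
- by rewrite -!catA; apply: geq_rel.
Qed.

Lemma geq_cancel_winv (u x v : word A) : eqG (u ++ x ++ winv x ++ v) (u ++ v).
Proof.
elim: x u v => [|l x IH] u v; first exact: geq_refl.
rewrite /winv /= rev_cons -cats1 -/(winv x).
have -> : u ++ l :: x ++ (winv x ++ [:: linv l]) ++ v
        = rcons u l ++ x ++ winv x ++ linv l :: v by rewrite -cats1 -!catA.
apply: geq_trans (IH _ _) _; rewrite -cats1 -catA; exact: geq_cancel.
Qed.

Lemma eq_cls (w1 w2 : word A) : eqG w1 w2 -> cls Rs phi w1 = cls Rs phi w2.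
Proof.
move=> w12; apply: eq_exist; apply/funext => w; apply/propext.
by split; [exact: geq_trans (geq_sym w12) | exact: geq_trans w12].
Qed.

Lemma geq_rep_cls (w : word A) : eqG (rep (cls Rs phi w)) w.
Proof.
rewrite /rep; case: cid => w' /= eqw.
by apply: geq_sym; rewrite eqw; exact: geq_refl.
Qed.

Lemma cls_rep (g : G Rs phi) : cls Rs phi (rep g) = g.
Proof. by case: g => S HS; rewrite /rep /=; case: cid => w /= eqS; apply: eq_exist. Qed.

Lemma gmulA (g : G Rs phi) (x y : word A) : gmul (gmul g x) y = gmul g (x ++ y).
Proof. by rewrite /gmul catA; apply/eq_cls/geq_catr/geq_rep_cls. Qed.

Lemma gmul0 (g : G Rs phi) : gmul g [::] = g.
Proof. by rewrite /gmul cats0 cls_rep. Qed.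

Lemma gmulK (g : G Rs phi) (x : word A) : gmul (gmul g x) (winv x) = g.
Proof.
rewrite gmulA /gmul -{2}(cls_rep g); apply: eq_cls.
by have := geq_cancel_winv (rep g) x [::]; rewrite !cats0.
Qed.

Local Open Scope ring_scope.

Definition texp_letter (l : letter A) : int :=
  if l.1 is None then (if l.2 then -1 else 1) else 0.

Definition texp (w : word A) : int := \sum_(l <- w) texp_letter l.

Lemma texp_cat (w1 w2 : word A) : texp (w1 ++ w2) = texp w1 + texp w2.
Proof. exact: big_cat. Qed.

Lemma texp_liftw (w : seq (A * bool)) : texp (liftw w) = 0.
Proof. by rewrite /texp big_map big1. Qed.

Lemma winv_liftw (w : seq (A * bool)) : winv (liftw w) = liftw (winv w).
Proof. by rewrite /winv /liftw -!map_rev -!map_comp. Qed.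

Lemma texp_tpow (k : nat) : texp (tpow A k) = k%:Z.
Proof.
elim: k => [|k IH]; first by rewrite /texp big_nil.
by rewrite /texp /tpow /= big_cons -/(texp _) IH /= -add1n PoszD.
Qed.

Lemma texp_relw (i : relidx Rs) : texp (relw phi i) = 0.
Proof.
case: i => [j|b] /=; first exact: texp_liftw.
by rewrite /conjrel winv_liftw !texp_cat texp_liftw /texp !big_cons !big_nil.
Qed.

Lemma texp_geq (w1 w2 : word A) : eqG w1 w2 -> texp w1 = texp w2.
Proof.
elim=> {w1 w2} [//|w1 w2 _ ->//|w1 w2 w3 _ -> _ ->//|u v x|u v i].
- rewrite !texp_cat /texp !big_cons; congr (_ + _).
  by case: x => [[b|] []]; rewrite /texp_letter /= addrA ?addNr ?subrr !add0r.
- by rewrite !texp_cat texp_relw add0r.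
Qed.

Definition texpG (g : G Rs phi) : int := texp (rep g).

Lemma texpG_gmul (g : G Rs phi) (x : word A) : texpG (gmul g x) = texpG g + texp x.
Proof. by rewrite /texpG /gmul (texp_geq (geq_rep_cls _)) texp_cat. Qed.

Lemma texpG_inA (g : G Rs phi) : inA g -> texpG g = 0.
Proof. by case=> w ->; rewrite /texpG (texp_geq (geq_rep_cls _)) texp_liftw. Qed.

Lemma texp_take_conjrel (b : A) (m : nat) : 0 <= texp (take m (conjrel phi b)).
Proof.
have -> : conjrel phi b = liftw [:: (b, false)] ++
    (None, false) :: liftw (winv (phiA phi b)) ++ [:: (None, true)].
  by rewrite /conjrel winv_liftw.
rewrite take_cat size_map; case: ifP => _; first by rewrite -map_take texp_liftw.
rewrite texp_cat texp_liftw add0r; case: (m - 1)%N => [|n].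
  by rewrite take0 /texp big_nil.
rewrite take_cons /texp big_cons -/(texp _) take_cat size_map.
case: ifP => _; first by rewrite -map_take texp_liftw.
rewrite texp_cat texp_liftw add0r.
by case: (n - _)%N => [|?]; rewrite ?take0 /texp ?big_cons !big_nil.
Qed.

Local Close Scope ring_scope.

Definition prefixes (w : word A) : seq (word A) := [seq take m w | m <- iota 0 (size w).+1].

Lemma take_prefixes (w : word A) (m : nat) : take m w \in prefixes w.
Proof.
apply/mapP; exists (minn m (size w)); first by rewrite mem_iota ltnS geq_minr.
by rewrite take_min take_size.
Qed.

Lemma prefixesP (w x : word A) : x \in prefixes w -> exists m, x = take m w.
Proof. by case/mapP=> m _ ->; exists m. Qed.

Definition cell_offset (l : A * bool) : word A :=
  if l.2 then [:: (Some l.1, true)] else [::].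

Definition strip_words (k : nat) (a : A) : seq (word A) :=
  let p := phi_iter phi k a in
  [seq tpow A k ++ x | x <- prefixes [:: (None, false)]] ++
  [seq (Some a, false) :: tpow A k ++ x | x <- prefixes [:: (None, false)]] ++
  [seq tpow A k ++ liftw (take j p) ++ cell_offset (nth (a, false) p j) ++ x
     | j <- iota 0 (size p), x <- prefixes (conjrel phi (nth (a, false) p j).1)].

Lemma texp_strip_words (k : nat) (a : A) (x : word A) :
  x \in strip_words k a -> (k%:Z <= texp x)%R.
Proof.
have texp_take_t m : (0 <= texp (take m [:: (None, false)]))%R.
  by case: m => [|?]; rewrite /texp ?big_cons big_nil.
rewrite !mem_cat => /or3P[/mapP[y /prefixesP[m ->] ->]|/mapP[y /prefixesP[m ->] ->]|].
- by rewrite texp_cat texp_tpow lerDl texp_take_t.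
- rewrite -cat1s texp_cat (texp_liftw [:: (a, false)]) add0r.
  by rewrite texp_cat texp_tpow lerDl texp_take_t.
case/allpairsPdep => j [y [_ [/prefixesP[m ->] ->]]].
rewrite !texp_cat texp_tpow texp_liftw add0r lerDl.
have -> : texp (cell_offset (nth (a, false) (phi_iter phi k a) j)) = 0%R.
  by rewrite /cell_offset; case: ifP => _; rewrite /texp ?big_cons big_nil.
by rewrite add0r texp_take_conjrel.
Qed.

Variable R : realType.

Definition base (y : X Rs phi R) : G Rs phi :=
  match y with XV g | XE g _ _ | XC g _ _ => g end.

Lemma base_edgechar (g : G Rs phi) (x : option A) (s : R) :
  exists m, base (edgechar g x s) = gmul g (take m [:: (x, false)]).
Proof.
rewrite /edgechar; case: insubP => [s' _ _|_]; first by exists 0%N; rewrite gmul0.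
by case: ifP => _; [exists 0%N; rewrite gmul0 | exists 1%N].
Qed.

Lemma base_letterpt (g : G Rs phi) (l : letter A) (u : R) :
  exists m, base (letterpt g l u) = gmul g (take m [:: l]).
Proof.
case: l => x [] /=; rewrite /letterpt /=; last exact: base_edgechar.
have [[|m] ->] := base_edgechar (gmul g [:: (x, true)]) x (1 - u).
  by exists 1%N; rewrite take0 gmul0.
exists 0%N; rewrite take_oversize // take0 gmul0.
exact: (gmulK g [:: (x, true)]).
Qed.

Lemma base_pathpt (g : G Rs phi) (r : word A) (s : R) :
  exists m, base (pathpt g r s) = gmul g (take m r).
Proof.
rewrite /pathpt; case size_r: (size r) => [|n]; first by exists 0%N; rewrite take0 gmul0.
set j := minn _ _; have lt_j : (j < size r)%N by rewrite size_r ltnS geq_minr.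
have [[|m] ->] := base_letterpt (gmul g (take j r)) (nth (None, false) r j) (s * n.+1%:R - j%:R).
  by exists j; rewrite gmul0.
by exists j.+1; rewrite gmulA (take_nth (None, false) lt_j) -cats1.
Qed.

Lemma base_cellchar (g : G Rs phi) (i : relidx Rs) (p : R * R) :
  exists m, base (cellchar g i p) = gmul g (take m (relw phi i)).
Proof.
rewrite /cellchar; case: ifP => _; first exact: base_pathpt.
by case: insubP => [z _ _|_]; exists 0%N; rewrite take0 gmul0.
Qed.

Lemma base_strip (v : G Rs phi) (a : A) (k : nat) (y : X Rs phi R) :
  strip v a k y -> exists2 x, x \in strip_words k a & base y = gmul v x.
Proof.
rewrite /strip /strip_words; set p := phi_iter phi k a.
case=> [[[s _ <-]|[s _ <-]]|[j lt_j]].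
- have [m ->] := base_edgechar (gmul v (tpow A k)) None s.
  exists (tpow A k ++ take m [:: (None, false)]); last by rewrite gmulA.
  by rewrite mem_cat map_f ?take_prefixes.
- have [m ->] := base_edgechar (gmul (gmul v [:: (Some a, false)]) (tpow A k)) None s.
  exists ((Some a, false) :: tpow A k ++ take m [:: (None, false)]); last by rewrite !gmulA.
  by rewrite !mem_cat map_f ?take_prefixes ?orbT.
set l := nth (a, false) p j; set u := gmul _ _.
have -> : conjcell u l = cell_img (gmul u (cell_offset l)) (inr l.1).
  by rewrite /conjcell /cell_offset; case: ifP; rewrite ?gmul0.
case=> q _ <-; have [m ->] := base_cellchar (gmul u (cell_offset l)) (inr l.1) q.
exists (tpow A k ++ liftw (take j p) ++ cell_offset l ++ take m (conjrel phi l.1)).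
  rewrite !mem_cat; apply/orP; right; apply/orP; right.
  by apply/allpairsPdep; exists j, (take m (conjrel phi l.1)); rewrite mem_iota take_prefixes.
by rewrite /u !gmulA.
Qed.

Lemma finite_strips_over (g : G Rs phi) :
  finite_set [set e : G Rs phi * A |
                inA e.1 /\ exists2 y : X Rs phi R, Himg e.1 e.2 y & base y = g].
Proof.
pose ka := [seq (k, a) | k <- iota 0 `|texpG g|.+1, a <- enum A].
pose kax := [seq (t, x) | t <- ka, x <- strip_words t.1 t.2].
apply: sub_finite_set (finite_image (fun t => (gmul g (winv t.2), t.1.2)) (finite_seq kax)).
move=> [v a] /= [vA [y [k _ stripy] yg]].
have [x wx yx] := base_strip stripy.
have texp_g : texpG g = texp x by rewrite -yg yx texpG_gmul texpG_inA // add0r.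
exists ((k, a), x); last by rewrite /= -yg yx gmulK.
apply/allpairsPdep; exists (k, a), x; split => //.
apply: allpairs_f; last by rewrite mem_enum.
by have := texp_strip_words wx; rewrite mem_iota /= add0n texp_g; lia.
Qed.

Section BaseInjective.
Variable Q : set (X Rs phi R).
Hypothesis Qinj : set_inj Q base.
Local Open Scope ring_scope.

Lemma finite_edge_preimage (g : G Rs phi) (x : option A) :
  finite_set [set s | I01 s /\ Q (edgechar g x s)].
Proof.
apply: (@sub_finite_set _ _ ([set 0; 1] `|` val @` [set s | Q (XE g x s)])).
  move=> s [/andP[s0 s1]]; rewrite /edgechar.
  case: insubP => [s' _ <- Qs|]; first by right; exists s'.
  rewrite negb_and -!leNgt => /orP[s_le0|s_ge1] _; left; [left|right];
    by apply/le_anti/andP; split.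
rewrite finite_setU; split; first exact: finite_set2.
apply/finite_image/subset1_finite => a b Qa Qb.
by have [] := Qinj (mem_set Qa) (mem_set Qb) erefl.
Qed.

Lemma finite_letter_preimage (h : G Rs phi) (l : letter A) :
  finite_set [set u | I01 u /\ Q (letterpt h l u)].
Proof.
case: l => x [] /=; rewrite /letterpt /=; last exact: finite_edge_preimage.
have := finite_image (fun s => 1 - s) (finite_edge_preimage (gmul h [:: (x, true)]) x).
apply: sub_finite_set.
move=> u [/andP[u0 u1] Qu]; exists (1 - u); last exact: subKr.
by split => //; apply/andP; split; lra.
Qed.

Lemma finite_path_preimage (g : G Rs phi) (r : word A) : (0 < size r)%N ->
  finite_set [set s | I01 s /\ Q (pathpt g r s)].
Proof.
rewrite /pathpt; case: (size r) => [//|n] _.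
pose piece (j : nat) := (fun u => (j%:R + u) / n.+1%:R) @`
  [set u | I01 u /\ Q (letterpt (gmul g (take j r)) (nth (None, false) r j) u)].
apply: (@sub_finite_set _ _ (\bigcup_(j in `I_n.+1) piece j)); last first.
  by apply: bigcup_finite (finite_II _) _ => j _; exact/finite_image/finite_letter_preimage.
move=> s [I01s Qs]; exists (minn `|Num.floor (s * n.+1%:R)|%N n).
  by rewrite /= ltnS geq_minr.
exists (s * n.+1%:R - (minn `|Num.floor (s * n.+1%:R)|%N n)%:R).
  by split => //; exact: pathpt_param_itv.
by rewrite addrC subrK mulfK.
Qed.

Lemma closed_path_preimage (g : G Rs phi) (r : word A) :
  closed [set s | I01 s /\ Q (pathpt g r s)].
Proof.
(* An empty relator gives a constant boundary loop. *)
case: (posnP (size r)) => [/size0nil ->|r_gt0]; last first.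
  by apply: finite_set_closed; [exact: Rhausdorff | exact: finite_path_preimage].
have [Qg|nQg] := pselect (Q (XV R g)); last first.
  have -> : [set s | I01 s /\ Q (pathpt g [::] s)] = set0.
    by apply/seteqP; split=> s // [_ Qs]; exact: nQg Qs.
  exact: closed0.
have -> : [set s | I01 s /\ Q (pathpt g [::] s)] = [set s | 0 <= s] `&` [set s | s <= 1].
  by apply/seteqP; split=> s /=; [case=> /andP[] | case=> s0 s1; split => //; apply/andP].
by apply: closedI; [exact: closed_ge | exact: closed_le].
Qed.

Lemma cellchar_interior (g : G Rs phi) (i : relidx Rs) (p : R * R) : 0 <= p.2 < 1 ->
  exists z : odisk R, cellchar g i p = XC g i z /\ val z = polar p.
Proof.
move=> /andP[p0 p1]; rewrite /cellchar ifN -?ltNge //.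
case: insubP => [z _ zp|]; first by exists z.
by rewrite -/(polar p) polar_norm expr2 => /negP[]; nra.
Qed.

Lemma openX_cell (g : G Rs phi) (i : relidx Rs) :
  rel_open (@I01sq R) [set p | (~` Q) (cellchar g i p)].
Proof.
pose boundary := snd @^-1` [set s : R | 1 <= s] `&`
                 fst @^-1` [set s | I01 s /\ Q (pathpt g (relw phi i) s)].
(* Not finite: [polar] collapses the segment [p.2 = 0] to the centre of the disk. *)
pose interior := @polar R @^-1` (val @` [set z | Q (XC g i z)]).
apply: (@rel_openC _ _ [set p | Q (cellchar g i p)] (boundary `|` interior)).
  apply: closedU; [apply: closedI|]; apply: preimage_closed.
  - by move=> p _; exact: cvg_snd.
  - exact: closed_ge.
  - by move=> p _; exact: cvg_fst.
  - exact: closed_path_preimage.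
  - by move=> p _; exact: continuous_polar.
  - apply: finite_set_closed; first exact: norm_hausdorff.
    apply/finite_image/subset1_finite => a b Qa Qb.
    by have [] := Qinj (mem_set Qa) (mem_set Qb) erefl.
apply/seteqP; split=> p [Qp I01p]; split=> //; case: (I01p) => /andP[p10 p11] /andP[p20 p21].
  have [p2_ge1|p2_lt1] := leP 1 p.2.
    by left; split=> //; split; [exact/andP | rewrite /cellchar /= p2_ge1 in Qp].
  have /(cellchar_interior g i)[z [cz zp]] : 0 <= p.2 < 1 by apply/andP.
  by right; exists z => /=; [rewrite -cz | rewrite zp].
case: Qp => [[/= p2_ge1 [_ Qp]]|[z Qz zp]]; first by rewrite /cellchar /= p2_ge1.
have p2_lt1 : p.2 < 1.
  have := valP z; rewrite zp => polar_lt1.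
  have : p.2 ^+ 2 < 1 by rewrite -polar_norm; exact: polar_lt1.
  by rewrite expr2; nra.
have /(cellchar_interior g i)[z' [/= -> z'p]] : 0 <= p.2 < 1 by apply/andP.
by rewrite /= (val_inj (etrans z'p (esym zp))).
Qed.

Lemma openX_edge (g : G Rs phi) (x : option A) :
  rel_open (@I01 R) [set s | (~` Q) (edgechar g x s)].
Proof.
apply: (@rel_openC _ _ [set s | Q (edgechar g x s)] [set s | I01 s /\ Q (edgechar g x s)]).
  by apply: finite_set_closed; [exact: Rhausdorff | exact: finite_edge_preimage].
by apply/seteqP; split=> s [Qs I01s] //; case: Qs.
Qed.

Lemma openXC_base_inj : openX (~` Q).
Proof. by split=> g x; [exact: openX_edge | exact: openX_cell]. Qed.

End BaseInjective.

End Presentation.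

Theorem lemma3p2 (A : finType) (Rs : seq (seq (A * bool)))
  (phi : A -> seq (A * bool)) (R : realType) (C : set (X Rs phi R)) :
  compactX C ->
  finite_set [set e : G Rs phi * A |
                inA e.1 /\ @Himg A Rs phi R e.1 e.2 `&` C !=set0].
Proof.
move=> compactC; apply: contrapT => infE.
pose D := [set y | C y /\ exists e : G Rs phi * A, inA e.1 /\ Himg e.1 e.2 y].
have infL : ~ finite_set [set base y | y in D].
  move=> finL; apply: infE.
  apply: sub_finite_set (bigcup_finite finL (fun g _ => finite_strips_over R g)).
  move=> e [eA [y [Hy Cy]]]; exists (base y); first by exists y => //; split => //; exists e.
  by split => //; exists y.
have [P [PD Pinj infP]] := infinite_image_inj_subset infL.
apply/infP/(cover_compact_discrete_finite compactC) => [y /PD[]//|Q QP].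
apply: openXC_base_inj => a b /set_mem Qa /set_mem Qb.
by apply: Pinj; apply/mem_set; exact: QP.
Qed.
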